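(* In the setting below, for every probability measure $\mathbb{Q}$ on $\mathcal{F}$, $$\inf_{D}L_D(D,\mathbb{Q}) = a-\tfrac{a}{2}\,\big\|\mathbb{P}^+-\big(\gamma\mathbb{Q}+(1-\gamma)\mathbb{P}^-\big)\big\|_{TV},$$ the infimum being over measurable $D:\mathcal{F}\to[0,+\infty)$ and being attained by some $D$ with values in $[0,a]$. Moreover $\big\|\mathbb{P}^+-(\gamma\mathbb{Q}+(1-\gamma)\mathbb{P}^-)\big\|_{TV}\ge 2(1-\gamma)$ for every $\mathbb{Q}$, with equality when $\mathbb{Q}=\mathbb{P}^+$.
   Context: $(\mathcal{F},\Sigma)$ is a measurable space, $\mathbb{P}^+,\mathbb{P}^-$ are mutually singular probability measures on it (there is a measurable $S$ with $\mathbb{P}^+(S)=1$, $\mathbb{P}^-(S)=0$), $a>0$, $\gamma\in(0,1]$, and for measurable $D:\mathcal{F}\to[0,\infty)$ and probability measure $\mathbb{Q}$, $L_D(D,\mathbb{Q})=\mathbb{E}_{\mathbb{P}^+}D+\gamma\,\mathbb{E}_{\mathbb{Q}}\max(0,a-D)+(1-\gamma)\,\mathbb{E}_{\mathbb{P}^-}\max(0,a-D)$. For probability measures $\mathbb{P}_1,\mathbb{P}_2$, $\|\mathbb{P}_1-\mathbb{P}_2\|_{TV}$ is the total variation norm $|\mu|(\mathcal{F})$ of $\mu=\mathbb{P}_1-\mathbb{P}_2$ (equivalently $\int|p_1-p_2|\,d\nu$). *)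

From HB Require Import structures.
From mathcomp Require Import all_boot all_order all_algebra.
From mathcomp Require Import all_classical all_reals all_analysis.
Set Implicit Arguments. Unset Strict Implicit. Unset Printing Implicit Defensive.
Import Order.TTheory GRing.Theory Num.Theory.
Local Open Scope classical_set_scope.
Local Open Scope ring_scope.
Local Open Scope ereal_scope.

Section Defs.
Context {d : measure_display} {T : measurableType d} {R : realType}.

Definition tv_norm (mu nu : set T -> \bar R) : \bar R :=
  ereal_sup [set s | exists (n : nat) (A : nat -> set T),
    [/\ (forall i, measurable (A i)),
        trivIset `I_n A,
        \bigcup_(i in `I_n) A i = setT &
        s = \sum_(i < n) `| mu (A i) - nu (A i) | ]].

Definition mixture (g : R) (Q Pm : set T -> \bar R) : set T -> \bar R :=
  fun A => (g%:E * Q A + (1 - g)%:E * Pm A).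

Definition lossD (Pp Pm Q : probability T R) (a g : R) (D : T -> R) : \bar R :=
  \int[Pp]_x (D x)%:E
  + g%:E * \int[Q]_x (Num.max 0 (a - D x))%:E
  + (1 - g)%:E * \int[Pm]_x (Num.max 0 (a - D x))%:E.

End Defs.

From HB Require Import structures.
From mathcomp Require Import all_boot all_order all_algebra.
From mathcomp Require Import all_classical all_reals all_analysis.
From mathcomp Require Import measurable_realfun ring lra.
Set Implicit Arguments. Unset Strict Implicit. Unset Printing Implicit Defensive.
Import Order.TTheory GRing.Theory Num.Theory.
Local Open Scope classical_set_scope.
Local Open Scope ring_scope.
Local Open Scope ereal_scope.

(* Write M = g Q + (1 - g) P^- and take a Hahn decomposition (P, N) of the
   signed measure P^+ - M.  Pointwise D + max(0, a - D) >= a, and P^+ dominates M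
   on P while M dominates P^+ on N; hence every discriminator has loss at least
   a (P^+(N) + M(P)), with equality for D = a 1_N.  The same decomposition gives
   ||P^+ - M||_TV = 2 (P^+(P) - M(P)), which turns this value into
   a - a/2 ||P^+ - M||_TV.  The bound 2 (1 - g) comes from the two-set partition
   {S, ~S} separating P^+ from P^-; for Q = P^+ it is attained because then
   P^+(P) - M(P) = (1 - g) (P^+(P) - P^-(P)) <= 1 - g. *)

Section tv_norm_lemmas.
Context d (T : measurableType d) (R : realType).
Implicit Types mu nu : set T -> \bar R.

Lemma tv_norm_ge_setC mu nu A : measurable A ->
  `|mu A - nu A| + `|mu (~` A) - nu (~` A)| <= tv_norm mu nu.
Proof.
move=> mA; apply: ereal_sup_ubound.
exists 2%N, (fun i => if i == 0%N then A else ~` A); split.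
- by move=> [|i] /=; [|exact: measurableC].
- apply/trivIsetP => -[|[|i]] [|[|j]] //= _ _ _; [exact: setICr|exact: setICl].
- apply/seteqP; split => // x _.
  by have [Ax|nAx] := pselect (A x); [exists 0%N|exists 1%N].
- by rewrite !big_ord_recr big_ord0 /= add0e.
Qed.

End tv_norm_lemmas.

Section finite_measure_lemmas.
Context d (T : measurableType d) (R : realType).
Variable m : {finite_measure set T -> \bar R}.

Lemma fine_measure_partition n (A : nat -> set T) B :
  (forall i, measurable (A i)) -> trivIset `I_n A ->
  \bigcup_(i in `I_n) A i = setT -> measurable B ->
  (\sum_(i < n) fine (m (A i `&` B)) = fine (m B))%R.
Proof.
move=> mA tA UA mB; have mAB i : measurable (A i `&` B) by exact: measurableI.
have UAB : \big[setU/set0]_(i < n) (A i `&` B) = B.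
  by rewrite -(bigcup_mkord n (fun i => A i `&` B)) -setI_bigcupl UA setTI.
apply: EFin_inj; rewrite -sumEFin fineK ?fin_num_measure//.
under eq_bigr do rewrite fineK ?fin_num_measure//.
rewrite -(@measure_semi_additive_ord_I _ _ _ m (fun i => A i `&` B)) ?UAB//.
exact: trivIset_setIr.
Qed.

Lemma fine_measure_setIC A B : measurable A -> measurable B ->
  fine (m A) = (fine (m (A `&` B)) + fine (m (A `&` ~` B)))%R.
Proof.
move=> mA mB; have mAB := measurableI _ _ mA mB.
have mABc := measurableI _ _ mA (measurableC mB).
apply: EFin_inj; rewrite EFinD !fineK ?fin_num_measure// -measureU//.
  by rewrite -setIUr setUv setIT.
by rewrite setIACA setICr setI0.
Qed.

End finite_measure_lemmas.

Lemma fine_probability_setC d (T : measurableType d) (R : realType)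
    (m : probability T R) A : measurable A ->
  fine (m (~` A)) = (1 - fine (m A))%R.
Proof.
by move=> mA; rewrite probability_setC// -[in LHS](fineK (fin_num_measure m A mA)).
Qed.

Section charge_sub.
Context d (T : measurableType d) (R : realType).
Variables mu nu : {finite_measure set T -> \bar R}.

Definition charge_sub :=
  cadd (charge_of_finite_measure mu) (copp (charge_of_finite_measure nu)).

HB.instance Definition _ := Charge.on charge_sub.

Lemma charge_subE A : charge_sub A = mu A - nu A.
Proof. by []. Qed.

End charge_sub.

Section hahn_decomposition_probability.
Context d (T : measurableType d) (R : realType).
Variables (mu nu : probability T R) (P N : set T).
Hypothesis PN : hahn_decomposition (charge_sub mu nu) P N.

Let mP : measurable P. Proof. by case: PN => -[]. Qed.
Let mN : measurable N. Proof. by case: PN => _ []. Qed.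

Lemma hahn_setC : ~` P = N.
Proof.
case: PN => _ _ PUN PIN; apply/seteqP; split => x.
- by move=> nPx; have [] : (P `|` N) x by rewrite PUN.
- by move=> Nx Px; have : (P `&` N) x by []; rewrite PIN.
Qed.

Lemma hahn_le_pos A : measurable A -> A `<=` P -> nu A <= mu A.
Proof.
move=> mA AP; case: PN => -[_ posP] _ _ _.
by rewrite -subre_ge0 ?fin_num_measure// -charge_subE; exact: posP.
Qed.

Lemma hahn_le_neg A : measurable A -> A `<=` N -> mu A <= nu A.
Proof.
move=> mA AN; case: PN => _ [_ negN] _ _.
by rewrite -sube_le0 -charge_subE; exact: negN.
Qed.

Let s A := (fine (mu A) - fine (nu A))%R.

Let s_split A : measurable A -> s A = (s (A `&` P) + s (A `&` N))%R.
Proof.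
move=> mA; rewrite /s -hahn_setC.
by rewrite (fine_measure_setIC mu mA mP) (fine_measure_setIC nu mA mP); lra.
Qed.

Let s_pos A : measurable A -> (0 <= s (A `&` P))%R.
Proof.
move=> mA; have mAP := measurableI _ _ mA mP.
by rewrite subr_ge0 fine_le ?fin_num_measure// hahn_le_pos//; exact: subIsetr.
Qed.

Let s_neg A : measurable A -> (s (A `&` N) <= 0)%R.
Proof.
move=> mA; have mAN := measurableI _ _ mA mN.
by rewrite subr_le0 fine_le ?fin_num_measure// hahn_le_neg//; exact: subIsetr.
Qed.

Let abse_s A : measurable A -> `|mu A - nu A| = `|s A|%:E.
Proof.
by move=> mA; rewrite -(fineK (fin_num_measure mu A mA)) -(fineK (fin_num_measure nu A mA)).
Qed.

Lemma tv_norm_hahn : tv_norm mu nu = (2 * (fine (mu P) - fine (nu P)))%:E.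
Proof.
have sN : s N = (- s P)%R.
  by rewrite /s -hahn_setC !fine_probability_setC//; lra.
apply/le_anti/andP; split.
- apply: ge_ereal_sup => _ [n [A [mA tA UA ->]]].
  under eq_bigr do rewrite abse_s//.
  rewrite sumEFin lee_fin.
  apply: (@le_trans _ _ (\sum_(i < n) (s (A i `&` P) - s (A i `&` N)))%R).
    apply: ler_sum => i _; rewrite s_split//.
    have := s_pos (mA i); have := s_neg (mA i); rewrite ler_norml; lra.
  rewrite sumrB /s !big_split /= !sumrN !fine_measure_partition//.
  by rewrite -/(s P) -/(s N) sN; lra.
- apply: le_trans (tv_norm_ge_setC mu nu mP).
  rewrite hahn_setC !abse_s// -EFinD lee_fin sN normrN.
  by have := ler_norm (s P); rewrite /s; lra.
Qed.

End hahn_decomposition_probability.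

Lemma ge0_le_measure_integral_in d (T : measurableType d) (R : realType)
    (m1 m2 : {measure set T -> \bar R}) (B : set T) (f : T -> \bar R) :
  measurable B -> (forall A, measurable A -> A `<=` B -> m1 A <= m2 A) ->
  (forall x, 0 <= f x) -> measurable_fun setT f ->
  \int[m1]_(x in B) f x <= \int[m2]_(x in B) f x.
Proof.
move=> mB m12 f0 mf.
have restrE (m : {measure set T -> \bar R}) :
    \int[m]_(x in B) f x = \int[mrestr m mB]_(x in B) f x.
  by apply: eq_measure_integral => A mA AB; rewrite /= /mrestr setIidl.
rewrite (restrE m1) (restrE m2); apply: ge0_le_measure_integral => // A mA.
by apply: m12; [exact: measurableI|exact: subIsetr].
Qed.

Section discriminator_loss.
Context d (T : measurableType d) (R : realType).

Definition discriminators : set (T -> R) :=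
  [set D : T -> R | measurable_fun setT D /\ forall x, (0 <= D x)%R].

Definition discriminator_loss (mu nu : {measure set T -> \bar R}) (a : R) (D : T -> R) :=
  \int[mu]_x (D x)%:E + \int[nu]_x (Num.max 0 (a - D x))%:E.

Variables (mu nu : probability T R) (P N : set T) (a : R).
Hypotheses (PN : hahn_decomposition (charge_sub mu nu) P N) (a_ge0 : (0 <= a)%R).

Let mP : measurable P. Proof. by case: PN => -[]. Qed.
Let mN : measurable N. Proof. by case: PN => _ []. Qed.

Let integral_split (m : {measure set T -> \bar R}) (f : T -> \bar R) :
  measurable_fun setT f -> \int[m]_x f x = \int[m]_(x in P) f x + \int[m]_(x in N) f x.
Proof.
move=> mf; rewrite -(hahn_setC PN) -integral_setU ?setUv//.
- exact: measurableC mP.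
- exact/disj_setPCl.
Qed.

Let le_integral_cst (m : {measure set T -> \bar R}) B (f : T -> \bar R) :
  measurable B -> measurable_fun setT f -> (forall x, a%:E <= f x) ->
  a%:E * m B <= \int[m]_(x in B) f x.
Proof.
move=> mB mf af; rewrite -(integral_cst m mB a%:E).
by apply: ge0_le_integral => //; exact: measurable_funTS.
Qed.

Lemma discriminator_loss_ge_hahn D : D \in discriminators ->
  a%:E * (mu N + nu P) <= discriminator_loss mu nu a D.
Proof.
rewrite inE => -[mD D0].
set h := fun x => (Num.max 0 (a - D x))%R.
have mDE : measurable_fun setT (fun x => (D x)%:E) by exact/measurable_EFinP.
have mh : measurable_fun setT (fun x => (h x)%:E).
  by apply/measurable_EFinP; apply: measurable_maxr => //; exact: measurable_funB.
have h0 x : 0 <= (h x)%:E by rewrite lee_fin le_max lexx.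
have Dh0 x : 0 <= (D x)%:E by rewrite lee_fin.
have mDh : measurable_fun setT (fun x => (D x)%:E + (h x)%:E) by exact: emeasurable_funD.
have aDh x : a%:E <= (D x)%:E + (h x)%:E.
  by rewrite -EFinD lee_fin -lerBlDl le_max lexx orbT.
rewrite /discriminator_loss (integral_split mu mDE) (integral_split nu mh).
have muN := le_integral_cst mu mN mDh aDh.
have nuP := le_integral_cst nu mP mDh aDh.
rewrite !ge0_integralD// in muN nuP; try exact: measurable_funTS.
have nu_le_mu : \int[nu]_(x in P) (D x)%:E <= \int[mu]_(x in P) (D x)%:E.
  by apply: ge0_le_measure_integral_in => // A; exact: (hahn_le_pos PN).
have mu_le_nu : \int[mu]_(x in N) (h x)%:E <= \int[nu]_(x in N) (h x)%:E.
  by apply: ge0_le_measure_integral_in => // A; exact: (hahn_le_neg PN).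
rewrite ge0_muleDr ?measure_ge0//; apply: le_trans (leeD muN nuP) _.
rewrite [X in _ <= X + _]addeC [X in _ <= _ + X]addeC addeACA.
by apply: leeD; apply: leeD.
Qed.

Lemma discriminator_loss_indic_hahn :
  discriminator_loss mu nu a (fun x => a * \1_N x)%R = a%:E * (mu N + nu P).
Proof.
have hingeE x : (Num.max 0 (a - a * \1_N x) = a * \1_P x)%R.
  rewrite !indicE -(hahn_setC PN) in_setC.
  by case: (x \in P); rewrite /= ?mulr1 ?mulr0 ?subrr ?subr0 ?maxxx// max_r.
rewrite /discriminator_loss [\int[nu]_x _](eq_integral (fun x => (a * \1_P x)%:E)); last first.
  by move=> x _; rewrite hingeE.
have a_lt0F : (a < 0)%R -> False by rewrite ltNge a_ge0.
rewrite (integralZl_indic measurableT (fun=> N)) ?(integralZl_indic measurableT (fun=> P));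
  try by [|move/a_lt0F].
rewrite !integral_indic// !setIT.
by rewrite -muleDr// ge0_adde_def// inE measure_ge0.
Qed.

Lemma discriminator_loss_inf_hahn :
  ereal_inf [set discriminator_loss mu nu a D | D in discriminators] = a%:E * (mu N + nu P).
Proof.
apply/le_anti/andP; split.
- rewrite -discriminator_loss_indic_hahn; apply: ereal_inf_lbound; exists (fun x => a * \1_N x)%R => //.
  split; first by apply: measurable_funM => //; exact: measurable_indic.
  by move=> x; rewrite mulr_ge0.
- by apply: le_ereal_inf_tmp => _ [D /mem_set D_discr <-]; exact: discriminator_loss_ge_hahn.
Qed.

End discriminator_loss.
Arguments discriminators {d T R}.

Section discriminator_loss_probability.
Context d (T : measurableType d) (R : realType).
Variables (mu nu : probability T R) (a : R).
Hypothesis a_gt0 : (0 < a)%R.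

Lemma discriminator_loss_infE :
  ereal_inf [set discriminator_loss mu nu a D | D in discriminators]
  = a%:E - (a / 2)%:E * tv_norm mu nu.
Proof.
have [P [N PN]] := Hahn_decomposition (charge_sub mu nu).
have [[mP _] _ _ _] := PN.
rewrite (discriminator_loss_inf_hahn PN) ?(ltW a_gt0)// (tv_norm_hahn PN) -(hahn_setC PN).
rewrite -(fineK (fin_num_measure nu P mP)).
rewrite -(fineK (fin_num_measure mu (~` P) (measurableC mP))).
by rewrite fine_probability_setC// -EFinD -!EFinM -EFinB; congr (_%:E); field.
Qed.

Lemma discriminator_loss_inf_attained : exists D : T -> R, [/\ measurable_fun setT D,
  (forall x, (0 <= D x <= a)%R) &
  discriminator_loss mu nu a D = ereal_inf [set discriminator_loss mu nu a D | D in discriminators]].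
Proof.
have [P [N PN]] := Hahn_decomposition (charge_sub mu nu).
have [_ [mN _] _ _] := PN.
exists (fun x => a * \1_N x)%R; split.
- by apply: measurable_funM => //; exact: measurable_indic.
- by move=> x; rewrite indicE; case: (x \in N); rewrite ?mulr1 ?mulr0 lexx ?ltW.
- by rewrite (discriminator_loss_inf_hahn PN) ?(discriminator_loss_indic_hahn PN) ?(ltW a_gt0).
Qed.

End discriminator_loss_probability.

Section mixture_probability.
Context d (T : measurableType d) (R : realType).
Variables (g : R) (Q Pm : probability T R).
Hypotheses (g_ge0 : (0 <= g)%R) (g_le1 : (g <= 1)%R).

Let g'_ge0 : (0 <= 1 - g)%R. Proof. by rewrite subr_ge0. Qed.

Definition mixture_measure :=
  measure_add (mscale (NngNum g_ge0) Q) (mscale (NngNum g'_ge0) Pm).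

HB.instance Definition _ := Measure.on mixture_measure.

Lemma mixture_measureE : mixture_measure = mixture g Q Pm :> (set T -> \bar R).
Proof. by apply/funext => A; exact: measure_addE. Qed.

Let mixture_measure_setT : mixture_measure setT = 1.
Proof.
by rewrite mixture_measureE /mixture !probability_setT !mule1 -EFinD subrKC.
Qed.

HB.instance Definition _ :=
  Measure_isProbability.Build _ _ _ mixture_measure mixture_measure_setT.

Lemma lossD_discriminator_loss (Pp : probability T R) a D : D \in discriminators ->
  lossD Pp Pm Q a g D = discriminator_loss Pp mixture_measure a D.
Proof.
rewrite inE => -[mD _].
have mh : measurable_fun setT (fun x => (Num.max 0 (a - D x))%:E).
  by apply/measurable_EFinP; apply: measurable_maxr => //; exact: measurable_funB.
rewrite /lossD /discriminator_loss -addeA ge0_integral_measure_add//; last first.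
  by move=> x _; rewrite lee_fin le_max lexx.
by rewrite !ge0_integral_mscale// => x _; rewrite lee_fin le_max lexx.
Qed.

End mixture_probability.

Lemma tv_norm_mixture_ge d (T : measurableType d) (R : realType)
    (Pp Pm Q : probability T R) (g : R) :
  (exists S, [/\ measurable S, Pp S = 1 & Pm S = 0]) ->
  (0 <= g <= 1)%R -> (2 * (1 - g))%:E <= tv_norm Pp (mixture g Q Pm).
Proof.
move=> [S [mS PpS PmS]] /andP[g_ge0 g_le1].
apply: le_trans (tv_norm_ge_setC _ _ mS).
have qS := fineK (fin_num_measure Q S mS).
have q_ge0 : (0 <= fine (Q S))%R by rewrite fine_ge0 ?measure_ge0.
have q_le1 : (fine (Q S) <= 1)%R by rewrite -lee_fin qS probability_le1.
rewrite /mixture !probability_setC// PpS PmS -qS.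
rewrite mule0 adde0 sube0 subee// sub0e abseN mule1.
rewrite -!EFinB -!EFinM -!EFinD lee_fin.
have := ler_norm (1 - g * fine (Q S))%R.
have := ler_norm (g * (1 - fine (Q S)) + (1 - g))%R.
have : (g * fine (Q S) <= g)%R by rewrite ler_piMr.
nra.
Qed.

Lemma tv_norm_mixture_self_le d (T : measurableType d) (R : realType)
    (Pp Pm : probability T R) (g : R) :
  (0 <= g <= 1)%R -> tv_norm Pp (mixture g Pp Pm) <= (2 * (1 - g))%:E.
Proof.
move=> /andP[g_ge0 g_le1]; rewrite -(mixture_measureE Pp Pm g_ge0 g_le1).
set M := mixture_measure Pp Pm g_ge0 g_le1.
have [P [N PN]] := Hahn_decomposition (charge_sub Pp M).
have [[mP _] _ _ _] := PN.
have MP : fine (M P) = (g * fine (Pp P) + (1 - g) * fine (Pm P))%R.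
  rewrite /M mixture_measureE /mixture -(fineK (fin_num_measure Pp P mP)).
  by rewrite -(fineK (fin_num_measure Pm P mP)) -!EFinM -EFinD.
have PpP_le1 : (fine (Pp P) <= 1)%R.
  by rewrite -lee_fin fineK ?fin_num_measure// probability_le1.
have PmP_ge0 : (0 <= fine (Pm P))%R by rewrite fine_ge0 ?measure_ge0.
rewrite (tv_norm_hahn PN) lee_fin MP; nra.
Qed.

Local Close Scope ereal_scope.

Theorem mainTheorem3 (d : measure_display) (T : measurableType d) (R : realType)
  (Pp Pm : probability T R) (a g : R)
  (Hsing : exists S : set T, [/\ measurable S, Pp S = 1%E & Pm S = 0%E])
  (Ha : 0 < a) (Hg0 : 0 < g) (Hg1 : g <= 1) :
  (forall Q : probability T R,
     ereal_inf [set lossD Pp Pm Q a g D | D in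
                  [set D : T -> R | measurable_fun setT D /\ forall x, 0 <= D x]]
       = (a%:E - (a / 2)%:E * tv_norm Pp (mixture g Q Pm))%E
   /\ exists D : T -> R, [/\ measurable_fun setT D,
        (forall x, 0 <= D x <= a) &
        lossD Pp Pm Q a g D
          = ereal_inf [set lossD Pp Pm Q a g D' | D' in
                  [set D' : T -> R | measurable_fun setT D' /\ forall x, 0 <= D' x]]])
  /\ (forall Q : probability T R,
        ((2 * (1 - g))%:E <= tv_norm Pp (mixture g Q Pm))%E)
  /\ tv_norm Pp (mixture g Pp Pm) = (2 * (1 - g))%:E.
Proof.
have g_ge0 := ltW Hg0; have g01 : (0 <= g <= 1)%R by rewrite g_ge0.
split; last split.
- move=> Q; set M := mixture_measure Q Pm g_ge0 Hg1.
  have lossE : [set lossD Pp Pm Q a g D | D in discriminators]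
             = [set discriminator_loss Pp M a D | D in discriminators].
    by apply: eq_imagel => D /mem_set; exact: lossD_discriminator_loss.
  rewrite -/(@discriminators d T R) lossE -(mixture_measureE Q Pm g_ge0 Hg1).
  split; first exact: discriminator_loss_infE.
  have [D [mD D_0a DE]] := discriminator_loss_inf_attained Pp M Ha.
  exists D; split => //; rewrite lossD_discriminator_loss// inE.
  by split=> // x; have /andP[] := D_0a x.
- by move=> Q; exact: tv_norm_mixture_ge.
- by apply/le_anti; rewrite tv_norm_mixture_self_le// tv_norm_mixture_ge.
Qed.
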